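(* Let $n\ge2$, let $r_1,\dots,r_{4^{n-1}+1}$ be the vertices of an affine Koch curve at step $n$, and let $w_n=c_1c_2\cdots c_{2\cdot 4^{n-2}-1}$ be its Koch code. Then: (i) for every $k$ with $c_k=1$ the affine curvatures satisfy $\kappa_{2k}=\kappa_{2k+1}=-1$, $\bar\kappa_{2k}=-1$, $\bar\kappa_{2k+1}=1$; for every $k$ with $c_k=0$ they satisfy $\kappa_{2k}=\kappa_{2k+1}=\bar\kappa_{2k}=\bar\kappa_{2k+1}=1$; (ii) $w_2=1$ and $w_{n+1}=w_n\,0\,w_n\,1\,w_n\,0\,w_n$ (concatenation of words) for all $n\ge 2$; in particular $w_3=1011101$, $w_4=1011101\,0\,1011101\,1\,1011101\,0\,1011101$, and $w_n$ has $2\cdot4^{n-2}-1$ letters.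
   Context: Let $R_\theta$ denote counterclockwise rotation of $\mathbb R^2$ by the angle $\theta$. The standard Koch curve at step $n$ is the polygon $K_n$ with vertices $r_1,\dots,r_{4^{n-1}+1}$ defined recursively: $K_1$ has vertices $(0,0),(1,0)$; $K_{n+1}$ is obtained from $K_n$ by replacing each edge from $p$ to $q$, in order, by the four edges through the points $p,\ p+\tfrac13(q-p),\ p+\tfrac13(q-p)+\tfrac13R_{\pi/3}(q-p),\ p+\tfrac23(q-p),\ q$, and numbering the resulting vertices consecutively starting from $(0,0)$. An affine Koch curve at step $n$ is the image of $K_n$ under an invertible affine map of $\mathbb R^2$, with vertices numbered correspondingly. A vertex $r_i$ ($2\le i\le 4^{n-1}$) of $K_n$ is a sharp point if the angle $\angle r_{i-1}r_ir_{i+1}$ equals $\pi/3$. For $n\ge 2$ the Koch code at step $n$ is the word $w_n=c_1\cdots c_{2\cdot4^{n-2}-1}$ over $\{0,1\}$ with $c_k=1$ iff $r_{2k+1}$ is a sharp point of $K_n$ (the same code is used for affine images of $K_n$). Affine curvatures: for a polygon with vertices $r_1,\dots,r_N\in\mathbb R^2$ put $t_k=r_{k+1}-r_k$ and $[a,b]=a_1b_2-a_2b_1$ for $a,b\in\mathbb R^2$. For $2\le k\le N-2$ with $[t_{k-1},t_k]\ne0$ the first and second affine curvatures at $r_k$ are $\kappa_k=\dfrac{[t_k,t_{k+1}]}{[t_{k-1},t_k]}$ and $\bar\kappa_k=\dfrac{[t_{k-1},t_{k+1}]}{[t_{k-1},t_k]}$. *)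

From Stdlib Require Import Reals Lra List Arith.
Import ListNotations.
Open Scope R_scope.

Definition pt := (R * R)%type.
Definition padd (p q : pt) : pt := (fst p + fst q, snd p + snd q).
Definition psub (p q : pt) : pt := (fst p - fst q, snd p - snd q).
Definition pscale (c : R) (p : pt) : pt := (c * fst p, c * snd p).
Definition rot (theta : R) (p : pt) : pt :=
  (cos theta * fst p - sin theta * snd p, sin theta * fst p + cos theta * snd p).

(* replace the edge p -> q by the four points after p (p itself is emitted by the previous step) *)
Definition koch_edge (p q : pt) : list pt :=
  let d := psub q p in
  [ padd p (pscale (1/3) d);
    padd (padd p (pscale (1/3) d)) (pscale (1/3) (rot (PI/3) d));
    padd p (pscale (2/3) d);
    q ].

Fixpoint refine_aux (p : pt) (l : list pt) : list pt :=
  match l with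
  | [] => []
  | q :: l' => koch_edge p q ++ refine_aux q l'
  end.

Definition refine (l : list pt) : list pt :=
  match l with
  | [] => []
  | p :: l' => p :: refine_aux p l'
  end.

(* K n : vertex list of the standard Koch curve at step n (n >= 1); K 0 := K 1 by convention *)
Fixpoint K (n : nat) : list pt :=
  match n with
  | O | S O => [(0,0); (1,0)]
  | S m => refine (K m)
  end.

(* 1-based vertex access: r_i *)
Definition vtx (l : list pt) (i : nat) : pt := nth (i - 1)%nat l (0,0).

Definition dot (a b : pt) : R := fst a * fst b + snd a * snd b.
Definition pnorm (a : pt) : R := sqrt (dot a a).
Definition vangle (a b : pt) : R := acos (dot a b / (pnorm a * pnorm b)).

Definition vertex_angle (l : list pt) (i : nat) : R :=
  vangle (psub (vtx l (i - 1)) (vtx l i)) (psub (vtx l (i + 1)) (vtx l i)).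

Definition sharp (l : list pt) (i : nat) : Prop := vertex_angle l i = PI / 3.

Definition sharpb (l : list pt) (i : nat) : bool :=
  if Req_EM_T (vertex_angle l i) (PI / 3) then true else false.

Definition koch_code (n : nat) : list bool :=
  map (fun k => sharpb (K n) (2 * k + 1)) (seq 1 (2 * 4 ^ (n - 2) - 1)).

Record affine_map := { a11 : R; a12 : R; a21 : R; a22 : R; b1 : R; b2 : R }.
Definition aff_det (f : affine_map) : R := a11 f * a22 f - a12 f * a21 f.
Definition aff_apply (f : affine_map) (p : pt) : pt :=
  (a11 f * fst p + a12 f * snd p + b1 f, a21 f * fst p + a22 f * snd p + b2 f).

Definition bracket (a b : pt) : R := fst a * snd b - snd a * fst b.
Definition tvec (l : list pt) (k : nat) : pt := psub (vtx l (k + 1)) (vtx l k).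
Definition kappa (l : list pt) (k : nat) : R :=
  bracket (tvec l k) (tvec l (k + 1)) / bracket (tvec l (k - 1)) (tvec l k).
Definition kappabar (l : list pt) (k : nat) : R :=
  bracket (tvec l (k - 1)) (tvec l (k + 1)) / bracket (tvec l (k - 1)) (tvec l k).

From Stdlib Require Import Reals List Arith ZArith Lia Lra.
Import ListNotations.
Open Scope R_scope.

(* The edges of [K n] are [koch_scale n] times unit vectors pointing in directions
   [d * PI/3] with [d] an integer, and refining an edge of direction [d] produces
   directions [d, d+1, d-1, d].  Hence the turn sequence (differences of consecutive
   directions) satisfies T(n+1) = T(n) 1 T(n) (-2) T(n) 1 T(n): the turn at an even
   vertex is always 1, the turn at r_(2k+1) is 1 or -2, and -2 is exactly a sharp
   point.  Reading off the odd turns gives the recursion for the Koch code.  An affine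
   map multiplies every bracket by its determinant and [L e_a, L e_b] =
   L^2 sin((b-a) PI/3), so the curvatures at r_(2k) and r_(2k+1) only depend on the
   three turns 1, t, 1 around them. *)

(** * Directions and turns *)

Fixpoint zdiffs (l : list Z) : list Z :=
  match l with
  | a :: ((b :: _) as l') => (b - a)%Z :: zdiffs l'
  | _ => []
  end.

Lemma zdiffs_cons2 (a b : Z) (l : list Z) :
  zdiffs (a :: b :: l) = (b - a)%Z :: zdiffs (b :: l).
Proof. reflexivity. Qed.

Lemma nth_zdiffs (l : list Z) (i : nat) : (S i < length l)%nat ->
  nth i (zdiffs l) 0%Z = (nth (S i) l 0 - nth i l 0)%Z.
Proof.
  revert i; induction l as [|a [|b l] IH]; intros i Hi; cbn in Hi; try lia.
  rewrite zdiffs_cons2; destruct i as [|i]; [reflexivity|].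
  apply IH; cbn; lia.
Qed.

(* Directions and turns are measured in units of [PI/3]. *)
Definition dir_block (d : Z) : list Z := [d; (d + 1)%Z; (d - 1)%Z; d].

Fixpoint koch_dirs (n : nat) : list Z :=
  match n with
  | O | S O => [0%Z]
  | S m => flat_map dir_block (koch_dirs m)
  end.

Definition koch_turns (n : nat) : list Z := zdiffs (koch_dirs n).

Definition turn_block (l : list Z) : list Z := flat_map (fun t => [t; 1; -2; 1]%Z) l.

Lemma zdiffs_flat_map_dir_block (l : list Z) :
  l <> [] -> zdiffs (flat_map dir_block l) = [1; -2; 1]%Z ++ turn_block (zdiffs l).
Proof.
  induction l as [|a [|b l] IH]; intros Hl; [congruence| |].
  - cbn. repeat f_equal; ring.
  - specialize (IH ltac:(discriminate)).
    change (flat_map dir_block (a :: b :: l))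
      with (a :: (a + 1)%Z :: (a - 1)%Z :: a :: flat_map dir_block (b :: l)).
    change (flat_map dir_block (b :: l))
      with (b :: (b + 1)%Z :: (b - 1)%Z :: b :: flat_map dir_block l) in *.
    rewrite !zdiffs_cons2 in *.
    rewrite IH. cbn. repeat f_equal; ring.
Qed.

Lemma koch_dirs_nonempty (n : nat) : koch_dirs n <> [].
Proof.
  induction n as [|[|n] IH]; try discriminate.
  change (koch_dirs (S (S n))) with (flat_map dir_block (koch_dirs (S n))).
  destruct (koch_dirs (S n)); [congruence | discriminate].
Qed.

Lemma koch_turns_succ (n : nat) :
  (1 <= n)%nat -> koch_turns (S n) = [1; -2; 1]%Z ++ turn_block (koch_turns n).
Proof.
  intros Hn; destruct n as [|n]; [lia|].
  exact (zdiffs_flat_map_dir_block _ (koch_dirs_nonempty (S n))).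
Qed.

Lemma koch_turns_succ_cat (n : nat) : (1 <= n)%nat ->
  koch_turns (S n)
  = koch_turns n ++ 1%Z :: koch_turns n ++ (-2)%Z :: koch_turns n ++ 1%Z :: koch_turns n.
Proof.
  induction n as [|[|n] IH]; intros Hn; [lia | reflexivity|].
  rewrite (koch_turns_succ (S (S n))), IH at 1 by lia.
  rewrite (koch_turns_succ (S n)) by lia.
  unfold turn_block; repeat (rewrite ?flat_map_app; cbn); reflexivity.
Qed.

(* [koch_word m] is the Koch code w_(m+2). *)
Fixpoint koch_word (m : nat) : list bool :=
  match m with
  | O => [true]
  | S m => let w := koch_word m in w ++ false :: w ++ true :: w ++ false :: w
  end.

(* Sharp points are exactly the vertices where the curve turns by -2 PI/3. *)
Definition turn_of_bit (c : bool) : Z := if c then (-2)%Z else 1%Z.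

Definition turns_of_word (w : list bool) : list Z :=
  1%Z :: flat_map (fun c => [turn_of_bit c; 1%Z]) w.

Lemma turns_of_word_cons (c : bool) (w : list bool) :
  turns_of_word (c :: w) = 1%Z :: turn_of_bit c :: turns_of_word w.
Proof. reflexivity. Qed.

Lemma turns_of_word_cat (a b : list bool) (c : bool) :
  turns_of_word (a ++ c :: b) = turns_of_word a ++ turn_of_bit c :: turns_of_word b.
Proof. unfold turns_of_word; rewrite flat_map_app; reflexivity. Qed.

Lemma koch_turns_word (m : nat) : koch_turns (S (S m)) = turns_of_word (koch_word m).
Proof.
  induction m as [|m IH]; [reflexivity|].
  rewrite koch_turns_succ_cat, IH by lia; cbn [koch_word].
  rewrite !turns_of_word_cat; reflexivity.
Qed.

Lemma nth_turns_of_word_even (w : list bool) (i : nat) :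
  (i <= length w)%nat -> nth (2 * i) (turns_of_word w) 0%Z = 1%Z.
Proof.
  revert i; induction w as [|c w IH]; intros [|i] Hi; cbn in Hi; try lia; try reflexivity.
  rewrite turns_of_word_cons.
  replace (2 * S i)%nat with (S (S (2 * i))) by lia.
  apply IH; lia.
Qed.

Lemma nth_turns_of_word_odd (w : list bool) (i : nat) :
  (i < length w)%nat -> nth (2 * i + 1) (turns_of_word w) 0%Z = turn_of_bit (nth i w false).
Proof.
  revert i; induction w as [|c w IH]; intros [|i] Hi; cbn in Hi; try lia; try reflexivity.
  rewrite turns_of_word_cons.
  replace (2 * S i + 1)%nat with (S (S (2 * i + 1))) by lia.
  apply IH; lia.
Qed.

Lemma length_koch_word (m : nat) : length (koch_word m) = (2 * 4 ^ m - 1)%nat.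
Proof.
  induction m as [|m IH]; [reflexivity|]. cbn [koch_word].
  repeat (rewrite ?length_app; cbn [length]); rewrite IH, Nat.pow_succ_r'.
  pose proof (Nat.pow_nonzero 4 m ltac:(discriminate)); lia.
Qed.

(** * Edges of the Koch curve *)

Fixpoint edges (l : list pt) : list pt :=
  match l with
  | p :: ((q :: _) as l') => psub q p :: edges l'
  | _ => []
  end.

Lemma edges_cons2 (p q : pt) (l : list pt) : edges (p :: q :: l) = psub q p :: edges (q :: l).
Proof. reflexivity. Qed.

Lemma length_edges (l : list pt) : length (edges l) = pred (length l).
Proof.
  induction l as [|p [|q l] IH]; [reflexivity | reflexivity |].
  rewrite edges_cons2; cbn in *; rewrite IH; reflexivity.
Qed.

Lemma nth_edges (l : list pt) (i : nat) : (S i < length l)%nat ->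
  nth i (edges l) (0, 0) = psub (nth (S i) l (0, 0)) (nth i l (0, 0)).
Proof.
  revert i; induction l as [|p [|q l] IH]; intros i Hi; cbn in Hi; try lia.
  rewrite edges_cons2; destruct i as [|i]; [reflexivity|].
  apply IH; cbn; lia.
Qed.

Lemma tvec_nth_edges (l : list pt) (j : nat) : (1 <= j < length l)%nat ->
  tvec l j = nth (j - 1) (edges l) (0, 0).
Proof.
  intros Hj; rewrite nth_edges by lia; unfold tvec, vtx.
  f_equal; f_equal; lia.
Qed.

Definition koch_edge_split (d : pt) : list pt :=
  [pscale (1/3) d; pscale (1/3) (rot (PI/3) d);
   psub (pscale (1/3) d) (pscale (1/3) (rot (PI/3) d)); pscale (1/3) d].

Lemma edges_refine_aux (p : pt) (l : list pt) :
  edges (p :: refine_aux p l) = flat_map koch_edge_split (edges (p :: l)).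
Proof.
  revert p; induction l as [|q l IH]; intros p; [reflexivity|].
  cbn [refine_aux koch_edge app]; rewrite !edges_cons2, IH.
  destruct p as [p1 p2], q as [q1 q2].
  unfold koch_edge_split, psub, padd, pscale, rot; cbn.
  repeat (apply (f_equal2 cons); [apply (f_equal2 pair); field |]); reflexivity.
Qed.

Lemma edges_refine (l : list pt) : edges (refine l) = flat_map koch_edge_split (edges l).
Proof. destruct l as [|p l]; [reflexivity | apply edges_refine_aux]. Qed.

Definition hex_angle (z : Z) : R := IZR z * (PI / 3).

Definition hex_dir (z : Z) : pt := (cos (hex_angle z), sin (hex_angle z)).

Fixpoint koch_scale (n : nat) : R :=
  match n with
  | O | S O => 1
  | S m => koch_scale m / 3
  end.

Lemma koch_scale_pos (n : nat) : 0 < koch_scale n.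
Proof.
  induction n as [|[|n] IH]; [cbn; lra | cbn; lra |].
  change (0 < koch_scale (S n) / 3); apply Rdiv_lt_0_compat; lra.
Qed.

Lemma koch_edge_split_hex_dir (L : R) (d : Z) :
  koch_edge_split (pscale L (hex_dir d)) = map (fun z => pscale (L / 3) (hex_dir z)) (dir_block d).
Proof.
  unfold koch_edge_split, dir_block, hex_dir, hex_angle, pscale, psub, rot; cbn.
  rewrite plus_IZR, minus_IZR, !Rmult_plus_distr_r, Rmult_minus_distr_r, Rmult_1_l.
  rewrite cos_plus, sin_plus, cos_minus, sin_minus, cos_PI3, sin_PI3.
  repeat (apply (f_equal2 cons); [apply (f_equal2 pair); field |]); reflexivity.
Qed.

Lemma edges_K (n : nat) :
  edges (K n) = map (fun z => pscale (koch_scale n) (hex_dir z)) (koch_dirs n).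
Proof.
  induction n as [|[|n] IH];
    try (cbn; unfold hex_dir, hex_angle, pscale, psub; cbn;
         rewrite Rmult_0_l, cos_0, sin_0; do 2 f_equal; ring).
  change (K (S (S n))) with (refine (K (S n))).
  rewrite edges_refine, IH.
  change (koch_dirs (S (S n))) with (flat_map dir_block (koch_dirs (S n))).
  change (koch_scale (S (S n))) with (koch_scale (S n) / 3).
  clear IH; induction (koch_dirs (S n)) as [|d l IHl]; [reflexivity|].
  cbn [map flat_map]; rewrite koch_edge_split_hex_dir, IHl, map_app; reflexivity.
Qed.

Lemma length_koch_dirs (n : nat) : length (koch_dirs n) = (4 ^ pred n)%nat.
Proof.
  induction n as [|[|n] IH]; [reflexivity | reflexivity |].
  change (koch_dirs (S (S n))) with (flat_map dir_block (koch_dirs (S n))).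
  cbn [pred] in *; rewrite Nat.pow_succ_r', <- IH.
  clear IH; induction (koch_dirs (S n)) as [|d l IHl]; cbn in *; lia.
Qed.

Lemma length_K (n : nat) : length (K n) = S (4 ^ pred n).
Proof.
  pose proof (f_equal (@length pt) (edges_K n)) as Hlen.
  rewrite length_edges, length_map, length_koch_dirs in Hlen.
  pose proof (Nat.pow_nonzero 4 (pred n) ltac:(discriminate)); lia.
Qed.

Definition koch_dir (n j : nat) : Z := nth (j - 1) (koch_dirs n) 0%Z.

Lemma tvec_K (n j : nat) : (1 <= j <= 4 ^ pred n)%nat ->
  tvec (K n) j = pscale (koch_scale n) (hex_dir (koch_dir n j)).
Proof.
  intros Hj; rewrite tvec_nth_edges by (rewrite length_K; lia).
  rewrite edges_K, nth_indep with (d' := pscale (koch_scale n) (hex_dir 0%Z))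
    by (rewrite length_map, length_koch_dirs; lia).
  exact (map_nth (fun z => pscale (koch_scale n) (hex_dir z)) _ 0%Z _).
Qed.

Lemma koch_dir_succ (n j : nat) : (1 <= j)%nat -> (j + 1 <= 4 ^ pred n)%nat ->
  koch_dir n (j + 1) = (koch_dir n j + nth (j - 1) (koch_turns n) 0)%Z.
Proof.
  intros Hj1 Hj2; unfold koch_dir, koch_turns.
  rewrite nth_zdiffs by (rewrite length_koch_dirs; lia).
  replace (j + 1 - 1)%nat with (S (j - 1)) by lia; lia.
Qed.

(** * Sharp points and the Koch code *)

Lemma vertex_angle_tvec (l : list pt) (i : nat) :
  vertex_angle l (i + 1) = vangle (pscale (-1) (tvec l i)) (tvec l (i + 1)).
Proof.
  unfold vertex_angle, tvec; replace (i + 1 - 1)%nat with i by lia.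
  f_equal; destruct (vtx l i), (vtx l (i + 1)); unfold psub, pscale; cbn; f_equal; ring.
Qed.

Lemma pnorm_opp (v : pt) : pnorm (pscale (-1) v) = pnorm v.
Proof. unfold pnorm, dot, pscale; cbn; f_equal; ring. Qed.

Lemma pnorm_hex_dir (L : R) (a : Z) : 0 <= L -> pnorm (pscale L (hex_dir a)) = L.
Proof.
  intros HL; unfold pnorm, dot, pscale, hex_dir; cbn.
  replace (_ + _) with (L * L * ((sin (hex_angle a))² + (cos (hex_angle a))²))
    by (unfold Rsqr; ring).
  rewrite sin2_cos2, Rmult_1_r; apply sqrt_square; exact HL.
Qed.

Lemma vangle_hex_dir (L : R) (a b : Z) : 0 < L ->
  vangle (pscale (-1) (pscale L (hex_dir a))) (pscale L (hex_dir b))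
  = acos (- cos (hex_angle (b - a))).
Proof.
  intros HL; unfold vangle; rewrite pnorm_opp, !pnorm_hex_dir by lra; f_equal.
  unfold dot, pscale, hex_dir, hex_angle; cbn.
  rewrite minus_IZR, Rmult_minus_distr_r, cos_minus; field; lra.
Qed.

Lemma cos_hex_angle_1 : cos (hex_angle 1) = 1 / 2.
Proof. unfold hex_angle; rewrite Rmult_1_l; apply cos_PI3. Qed.

Lemma cos_hex_angle_m2 : cos (hex_angle (-2)) = - (1 / 2).
Proof.
  unfold hex_angle; replace (IZR (-2) * (PI / 3)) with (- (PI - PI / 3)) by lra.
  rewrite cos_neg, Rtrigo_facts.cos_pi_minus, cos_PI3; reflexivity.
Qed.

Lemma acos_half : acos (1 / 2) = PI / 3.
Proof. rewrite <- cos_PI3; apply acos_cos; pose proof PI_RGT_0; lra. Qed.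

Lemma acos_opp_half : acos (- (1 / 2)) = PI - PI / 3.
Proof.
  rewrite <- cos_PI3, <- Rtrigo_facts.cos_pi_minus; apply acos_cos.
  pose proof PI_RGT_0; lra.
Qed.

Lemma sharpb_K (n j : nat) (c : bool) : (1 <= j)%nat -> (j + 1 <= 4 ^ pred n)%nat ->
  nth (j - 1) (koch_turns n) 0%Z = turn_of_bit c -> sharpb (K n) (j + 1) = c.
Proof.
  intros Hj1 Hj2 Hturn.
  unfold sharpb; rewrite vertex_angle_tvec, !tvec_K, vangle_hex_dir, koch_dir_succ, Hturn
    by (apply koch_scale_pos || lia).
  replace (koch_dir n j + turn_of_bit c - koch_dir n j)%Z with (turn_of_bit c) by ring.
  pose proof PI_RGT_0.
  destruct c; cbn [turn_of_bit].
  - rewrite cos_hex_angle_m2, Ropp_involutive, acos_half.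
    destruct (Req_EM_T _ _); [reflexivity | lra].
  - rewrite cos_hex_angle_1, acos_opp_half.
    destruct (Req_EM_T _ _); [lra | reflexivity].
Qed.

Lemma koch_code_word (m : nat) : koch_code (S (S m)) = koch_word m.
Proof.
  assert (Hlen : length (koch_word m) = (2 * 4 ^ m - 1)%nat) by apply length_koch_word.
  unfold koch_code; replace (S (S m) - 2)%nat with m by lia.
  apply nth_ext with (d := false) (d' := false).
  - rewrite length_map, length_seq; lia.
  - intros i Hi; rewrite length_map, length_seq in Hi.
    set (code_bit := fun k => sharpb (K (S (S m))) (2 * k + 1)).
    rewrite nth_indep with (d' := code_bit 0%nat) by (rewrite length_map, length_seq; lia).
    rewrite map_nth, seq_nth by lia; unfold code_bit.
    replace (2 * (1 + i) + 1)%nat with (2 * i + 2 + 1)%nat by lia.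
    apply sharpb_K.
    + lia.
    + cbn [pred]; rewrite Nat.pow_succ_r'; lia.
    + replace (2 * i + 2 - 1)%nat with (2 * i + 1)%nat by lia.
      rewrite koch_turns_word; apply nth_turns_of_word_odd; lia.
Qed.

(** * Affine curvatures *)

Definition aff_lin (f : affine_map) (p : pt) : pt :=
  (a11 f * fst p + a12 f * snd p, a21 f * fst p + a22 f * snd p).

Lemma tvec_map_aff (f : affine_map) (l : list pt) (j : nat) : (1 <= j < length l)%nat ->
  tvec (map (aff_apply f) l) j = aff_lin f (tvec l j).
Proof.
  intros Hj; unfold tvec, vtx.
  rewrite !nth_indep with (d := (0, 0)) (d' := aff_apply f (0, 0))
    by (rewrite length_map; lia).
  rewrite !map_nth.
  destruct (nth (j + 1 - 1) l (0, 0)), (nth (j - 1) l (0, 0)).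
  unfold aff_lin, aff_apply, psub; cbn; f_equal; ring.
Qed.

Lemma bracket_aff_lin (f : affine_map) (u v : pt) :
  bracket (aff_lin f u) (aff_lin f v) = aff_det f * bracket u v.
Proof. destruct u, v; unfold bracket, aff_lin, aff_det; cbn; ring. Qed.

Lemma bracket_hex_dir (L : R) (a b : Z) :
  bracket (pscale L (hex_dir a)) (pscale L (hex_dir b)) = L * L * sin (hex_angle (b - a)).
Proof.
  unfold bracket, pscale, hex_dir, hex_angle; cbn.
  rewrite minus_IZR, Rmult_minus_distr_r, sin_minus; ring.
Qed.

Lemma bracket_tvec_aff_K (f : affine_map) (n i j : nat) :
  (1 <= i <= 4 ^ pred n)%nat -> (1 <= j <= 4 ^ pred n)%nat ->
  let r := map (aff_apply f) (K n) in
  bracket (tvec r i) (tvec r j)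
  = aff_det f * (koch_scale n * koch_scale n) * sin (hex_angle (koch_dir n j - koch_dir n i)).
Proof.
  intros Hi Hj r; unfold r.
  rewrite !tvec_map_aff by (rewrite length_K; lia).
  rewrite bracket_aff_lin, !tvec_K, bracket_hex_dir by lia; ring.
Qed.

Lemma koch_dir_turns_at (m k : nat) : (1 <= k <= 2 * 4 ^ m - 1)%nat ->
  let D := koch_dir (S (S m)) in
  D (2 * k)%nat = (D (2 * k - 1)%nat + 1)%Z /\
  D (2 * k + 1)%nat = (D (2 * k)%nat + turn_of_bit (nth (k - 1) (koch_word m) false))%Z /\
  D (2 * k + 2)%nat = (D (2 * k + 1)%nat + 1)%Z.
Proof.
  intros Hk D.
  assert (Hlen : length (koch_word m) = (2 * 4 ^ m - 1)%nat) by apply length_koch_word.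
  assert (Hpow : (4 ^ pred (S (S m)) = 4 * 4 ^ m)%nat) by apply Nat.pow_succ_r'.
  assert (Hstep : forall j, (1 <= j)%nat -> (j + 1 <= 4 * 4 ^ m)%nat ->
    D (j + 1)%nat = (D j + nth (j - 1) (turns_of_word (koch_word m)) 0)%Z).
  { intros j Hj1 Hj2; unfold D; rewrite koch_dir_succ, koch_turns_word by lia; reflexivity. }
  split; [|split].
  - replace (2 * k)%nat with (2 * k - 1 + 1)%nat at 1 by lia.
    rewrite Hstep by lia.
    replace (2 * k - 1 - 1)%nat with (2 * (k - 1))%nat by lia.
    rewrite nth_turns_of_word_even by lia.
    replace (2 * k - 1 + 1)%nat with (2 * k)%nat by lia; reflexivity.
  - rewrite Hstep by lia.
    replace (2 * k - 1)%nat with (2 * (k - 1) + 1)%nat by lia.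
    rewrite nth_turns_of_word_odd by lia; reflexivity.
  - replace (2 * k + 2)%nat with (2 * k + 1 + 1)%nat by lia.
    rewrite Hstep by lia.
    replace (2 * k + 1 - 1)%nat with (2 * k)%nat by lia.
    rewrite nth_turns_of_word_even by lia; reflexivity.
Qed.

Lemma sin_hex_angle_1_pos : 0 < sin (hex_angle 1).
Proof.
  unfold hex_angle; rewrite Rmult_1_l; pose proof PI_RGT_0.
  apply sin_gt_0; lra.
Qed.

Lemma sin_hex_angle_2 : sin (hex_angle 2) = sin (hex_angle 1).
Proof.
  unfold hex_angle; replace (IZR 2 * (PI / 3)) with (PI - 1 * (PI / 3)) by lra.
  apply sin_PI_x.
Qed.

Lemma sin_hex_angle_opp (z : Z) : sin (hex_angle (- z)) = - sin (hex_angle z).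
Proof. unfold hex_angle; rewrite opp_IZR, Ropp_mult_distr_l_reverse; apply sin_neg. Qed.

Lemma curvatures_of_turns (r : list pt) (k : nat) (C : R) (D : nat -> Z) (c : bool) :
  C <> 0 ->
  (forall i j, (2 * k - 1 <= i <= 2 * k + 2)%nat -> (2 * k - 1 <= j <= 2 * k + 2)%nat ->
     bracket (tvec r i) (tvec r j) = C * sin (hex_angle (D j - D i))) ->
  D (2 * k)%nat = (D (2 * k - 1)%nat + 1)%Z ->
  D (2 * k + 1)%nat = (D (2 * k)%nat + turn_of_bit c)%Z ->
  D (2 * k + 2)%nat = (D (2 * k + 1)%nat + 1)%Z ->
  bracket (tvec r (2 * k - 1)) (tvec r (2 * k)) <> 0 /\
  bracket (tvec r (2 * k)) (tvec r (2 * k + 1)) <> 0 /\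
  (c = true ->
     kappa r (2 * k) = -1 /\ kappa r (2 * k + 1) = -1 /\
     kappabar r (2 * k) = -1 /\ kappabar r (2 * k + 1) = 1) /\
  (c = false ->
     kappa r (2 * k) = 1 /\ kappa r (2 * k + 1) = 1 /\
     kappabar r (2 * k) = 1 /\ kappabar r (2 * k + 1) = 1).
Proof.
  intros HC Hbr H1 H2 H3.
  assert (Hsin : forall i j z, (2 * k - 1 <= i <= 2 * k + 2)%nat ->
    (2 * k - 1 <= j <= 2 * k + 2)%nat -> (D j - D i)%Z = z ->
    bracket (tvec r i) (tvec r j) = C * sin (hex_angle z)).
  { intros i j z Hi Hj <-; apply Hbr; assumption. }
  unfold kappa, kappabar.
  replace (2 * k + 1 + 1)%nat with (2 * k + 2)%nat by lia.
  replace (2 * k + 1 - 1)%nat with (2 * k)%nat by lia.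
  pose proof sin_hex_angle_1_pos.
  destruct c; cbn [turn_of_bit] in H2.
  - rewrite (Hsin (2 * k - 1)%nat (2 * k)%nat 1%Z), (Hsin (2 * k)%nat (2 * k + 1)%nat (-2)%Z),
      (Hsin (2 * k + 1)%nat (2 * k + 2)%nat 1%Z), (Hsin (2 * k - 1)%nat (2 * k + 1)%nat (-1)%Z),
      (Hsin (2 * k)%nat (2 * k + 2)%nat (-1)%Z) by lia.
    change (hex_angle (-2)) with (hex_angle (- (2))).
    change (hex_angle (-1)) with (hex_angle (- (1))).
    rewrite !sin_hex_angle_opp, sin_hex_angle_2.
    repeat split; try discriminate; try (apply Rmult_integral_contrapositive; split; lra);
      field; split; lra.
  - rewrite (Hsin (2 * k - 1)%nat (2 * k)%nat 1%Z), (Hsin (2 * k)%nat (2 * k + 1)%nat 1%Z),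
      (Hsin (2 * k + 1)%nat (2 * k + 2)%nat 1%Z), (Hsin (2 * k - 1)%nat (2 * k + 1)%nat 2%Z),
      (Hsin (2 * k)%nat (2 * k + 2)%nat 2%Z) by lia.
    rewrite sin_hex_angle_2.
    repeat split; try discriminate; try (apply Rmult_integral_contrapositive; split; lra);
      field; split; lra.
Qed.

Lemma affine_koch_curvatures (f : affine_map) (m k : nat) :
  aff_det f <> 0 -> (1 <= k <= 2 * 4 ^ m - 1)%nat ->
  let r := map (aff_apply f) (K (S (S m))) in
  let c := nth (k - 1) (koch_word m) false in
  bracket (tvec r (2 * k - 1)) (tvec r (2 * k)) <> 0 /\
  bracket (tvec r (2 * k)) (tvec r (2 * k + 1)) <> 0 /\
  (c = true ->
     kappa r (2 * k) = -1 /\ kappa r (2 * k + 1) = -1 /\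
     kappabar r (2 * k) = -1 /\ kappabar r (2 * k + 1) = 1) /\
  (c = false ->
     kappa r (2 * k) = 1 /\ kappa r (2 * k + 1) = 1 /\
     kappabar r (2 * k) = 1 /\ kappabar r (2 * k + 1) = 1).
Proof.
  intros Hdet Hk r c.
  pose proof (koch_scale_pos (S (S m))).
  destruct (koch_dir_turns_at m k Hk) as (H1 & H2 & H3).
  apply curvatures_of_turns
    with (C := aff_det f * (koch_scale (S (S m)) * koch_scale (S (S m))))
         (D := koch_dir (S (S m))); try assumption.
  - apply Rmult_integral_contrapositive; split; [assumption | nra].
  - intros i j Hi Hj; apply bracket_tvec_aff_K; cbn [pred]; rewrite Nat.pow_succ_r'; lia.
Qed.

Theorem mainTheorem2 :
  (forall (f : affine_map) (n k : nat),
      aff_det f <> 0 -> (2 <= n)%nat ->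
      (1 <= k <= 2 * 4 ^ (n - 2) - 1)%nat ->
      let r := map (aff_apply f) (K n) in
      bracket (tvec r (2 * k - 1)) (tvec r (2 * k)) <> 0 /\
      bracket (tvec r (2 * k)) (tvec r (2 * k + 1)) <> 0 /\
      (nth (k - 1) (koch_code n) false = true ->
         kappa r (2 * k) = -1 /\ kappa r (2 * k + 1) = -1 /\
         kappabar r (2 * k) = -1 /\ kappabar r (2 * k + 1) = 1) /\
      (nth (k - 1) (koch_code n) false = false ->
         kappa r (2 * k) = 1 /\ kappa r (2 * k + 1) = 1 /\
         kappabar r (2 * k) = 1 /\ kappabar r (2 * k + 1) = 1)) /\
  koch_code 2 = [true] /\
  (forall n : nat, (2 <= n)%nat ->
     koch_code (S n) = koch_code n ++ [false] ++ koch_code n ++ [true]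
                       ++ koch_code n ++ [false] ++ koch_code n) /\
  koch_code 3 = [true; false; true; true; true; false; true] /\
  koch_code 4 = [true; false; true; true; true; false; true] ++ [false] ++
                [true; false; true; true; true; false; true] ++ [true] ++
                [true; false; true; true; true; false; true] ++ [false] ++
                [true; false; true; true; true; false; true] /\
  (forall n : nat, (2 <= n)%nat -> length (koch_code n) = (2 * 4 ^ (n - 2) - 1)%nat).
Proof.
  split; [|split; [|split; [|split; [|split]]]].
  - intros f [|[|m]] k Hdet Hn Hk; try lia.
    replace (S (S m) - 2)%nat with m in Hk by lia.
    rewrite koch_code_word; apply affine_koch_curvatures; assumption.
  - exact (koch_code_word 0).
  - intros [|[|m]] Hn; try lia.
    rewrite !koch_code_word; reflexivity.
  - exact (koch_code_word 1).
  - exact (koch_code_word 2).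
  - intros n _; unfold koch_code; rewrite length_map, length_seq; reflexivity.
Qed.
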